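(* Let $G$ be a simple graph on $n$ vertices and $1\le k<n$ an integer such that $F_k(G)$ is regular. Then $F_k(\overline{G})$ is also regular, where $\overline{G}$ is the complement of $G$.
   Context: For a simple graph $G=(V,E)$ on $n$ vertices and an integer $1\le k<n$, the $k$-token graph $F_k(G)$ is the graph whose vertices are all $k$-element subsets of $V$, two such subsets $A,B$ being adjacent whenever their symmetric difference $A\triangle B$ is a pair $\{a,b\}$ with $a$ adjacent to $b$ in $G$. *)

From mathcomp Require Import all_boot.
Set Implicit Arguments. Unset Strict Implicit. Unset Printing Implicit Defensive.

Definition simple_graph (T : finType) (e : rel T) : Prop :=
  irreflexive e /\ symmetric e.

Definition compl_graph (T : finType) (e : rel T) : rel T :=
  fun x y => (x != y) && ~~ e x y.

Definition symdiff (T : finType) (A B : {set T}) : {set T} :=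
  (A :\: B) :|: (B :\: A).

(* Adjacency in the k-token graph F_k(G): A triangle B = {a,b} with a ~ b in G. *)
Definition token_adj (T : finType) (e : rel T) (A B : {set T}) : bool :=
  [exists a : T, exists b : T, (symdiff A B == [set a; b]) && e a b].

Definition token_vertex (T : finType) (k : nat) (A : {set T}) : bool :=
  #|A| == k.

Definition token_deg (T : finType) (e : rel T) (k : nat) (A : {set T}) : nat :=
  #|[set B : {set T} | token_vertex k B && token_adj e A B]|.

Definition token_regular (T : finType) (e : rel T) (k : nat) : Prop :=
  exists d : nat, forall A : {set T}, token_vertex k A -> token_deg e k A = d.

From mathcomp Require Import all_boot zify.
Set Implicit Arguments. Unset Strict Implicit. Unset Printing Implicit Defensive.

(* The neighbours of a k-set A in F_k(G) are exactly the sets (A \ {a}) u {b}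
   with a in A, b outside A and ab an edge of G, and distinct such edges give
   distinct neighbours: the degree of A is the number of edges of G leaving A.
   Each pair in A x (V \ A) is an edge of exactly one of G and its complement,
   so deg_G A + deg_Gbar A = k (n - k); if F_k(G) is d-regular, F_k(Gbar) is
   therefore (k (n - k) - d)-regular. *)

Section Exchange.

Variable T : finType.
Implicit Types (A B : {set T}) (a b x y : T).

Definition exchange A a b : {set T} := b |: A :\ a.

Section ExchangeIn.

Context {A : {set T}} {a b : T}.
Hypotheses (aA : a \in A) (bNA : b \notin A).

Lemma exchangeDl : A :\: exchange A a b = [set a].
Proof.
apply/setP => z; rewrite !inE.
case: (eqVneq z a) => [->|_] /=; last by case: (z \in A); rewrite ?orbT ?andbF.
by rewrite aA orbF andbT; apply: contraNneq bNA => <-.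
Qed.

Lemma exchangeDr : exchange A a b :\: A = [set b].
Proof.
apply/setP => z; rewrite !inE.
by case: (eqVneq z b) => [->|]; [rewrite bNA | case: (z \in A); rewrite ?andbF].
Qed.

Lemma card_exchange : #|exchange A a b| = #|A|.
Proof. by rewrite cardsU1 !inE (negbTE bNA) andbF (cardsD1 a A) aA. Qed.

Lemma symdiff_exchange : symdiff A (exchange A a b) = [set a; b].
Proof. by rewrite /symdiff exchangeDl exchangeDr. Qed.

End ExchangeIn.

Lemma exchange_setD A B x y :
  A :\: B = [set x] -> B :\: A = [set y] -> B = exchange A x y.
Proof.
move=> /setP hx /setP hy; apply/setP => z; move: (hx z) (hy z); rewrite !inE.
by case: (z \in A); case: (z \in B) => /= <- <-.
Qed.

Lemma exchange_inj A a b c d : a \in A -> b \notin A -> c \in A -> d \notin A ->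
  exchange A a b = exchange A c d -> (a, b) = (c, d).
Proof.
move=> aA bNA cA dNA eq_ex.
have := congr1 (fun B => A :\: B) eq_ex; rewrite !exchangeDl // => /set1_inj ->.
by have := congr1 (fun B => B :\: A) eq_ex; rewrite !exchangeDr // => /set1_inj ->.
Qed.

Lemma card_symdiff A B : #|symdiff A B| = #|A :\: B| + #|B :\: A|.
Proof.
rewrite -cardsUI; suff -> : (A :\: B) :&: (B :\: A) = set0 by rewrite cards0 addn0.
by apply/setP => z; rewrite !inE; case: (z \in A); rewrite ?andbF.
Qed.

Lemma symdiff_eq_set2 A B a b : #|A| = #|B| -> symdiff A B = [set a; b] ->
  exists x y, [/\ x \in A, y \notin A, B = exchange A x y
                & (x, y) = (a, b) \/ (x, y) = (b, a)].
Proof.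
move=> cardAB sdAB.
have cardD : #|A :\: B| = #|B :\: A| by rewrite !cardsD setIC cardAB.
(* |[set a; b]| is the even number 2 |A :\: B|, which also rules out a = b. *)
have /cards1P[x Dx] : #|A :\: B| == 1.
  by move: (card_symdiff A B); rewrite sdAB cards2 -cardD; case: (a != b); lia.
have /cards1P[y Dy] : #|B :\: A| == 1 by rewrite -cardD Dx cards1.
have /setDP[xA _] : x \in A :\: B by rewrite Dx set11.
have /setDP[_ yNA] : y \in B :\: A by rewrite Dy set11.
have x_ab : x \in [set a; b] by rewrite -sdAB /symdiff Dx Dy !inE eqxx.
have y_ab : y \in [set a; b] by rewrite -sdAB /symdiff Dx Dy !inE eqxx orbT.
exists x, y; split=> //; first exact: exchange_setD.
have x_neq_y : x != y by apply: contraNneq yNA => <-.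
by move: x_ab y_ab x_neq_y; rewrite !inE => /orP[]/eqP-> /orP[]/eqP->; rewrite ?eqxx; auto.
Qed.

End Exchange.

Definition edge_boundary (T : finType) (e : rel T) (A : {set T}) : {set T * T} :=
  [set p | [&& p.1 \in A, p.2 \notin A & e p.1 p.2]].

Section TokenDegree.

Variables (T : finType) (e : rel T).
Hypothesis e_sym : symmetric e.
Implicit Types A B : {set T}.

Lemma token_adjP {A B} : #|A| = #|B| ->
  reflect (exists2 p, p \in edge_boundary e A & B = exchange A p.1 p.2)
          (token_adj e A B).
Proof.
move=> cardAB; apply: (iffP existsP) => [[a /existsP[b /andP[/eqP sdAB eab]]] | ].
  have [x [y [xA yNA -> xy_ab]]] := symdiff_eq_set2 cardAB sdAB.
  exists (x, y) => //; rewrite inE /= xA yNA.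
  by case: xy_ab => [[-> ->] | [-> ->]]; rewrite // e_sym.
move=> [[a b]]; rewrite inE /= => /and3P[aA bNA eab] ->.
by exists a; apply/existsP; exists b; rewrite symdiff_exchange ?eqxx.
Qed.

Lemma token_deg_boundary k A : #|A| = k -> token_deg e k A = #|edge_boundary e A|.
Proof.
move=> cardA; rewrite /token_deg.
have exch_inj : {in edge_boundary e A &, injective (fun p => exchange A p.1 p.2)}.
  move=> [a b] [c d]; rewrite !inE /= => /and3P[aA bNA _] /and3P[cA dNA _].
  exact: exchange_inj.
rewrite -(card_in_imset exch_inj); apply: eq_card => B; rewrite inE.
apply/andP/imsetP => [[/eqP cardB adjAB] | [[a b]]].
  have cardAB : #|A| = #|B| by rewrite cardA cardB.
  by have [p p_in ->] := token_adjP cardAB adjAB; exists p.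
rewrite inE /= => /and3P[aA bNA eab] ->.
have cardAX : #|A| = #|exchange A a b| by rewrite card_exchange.
split; first by rewrite /token_vertex -cardAX cardA.
by apply/(token_adjP cardAX); exists (a, b); rewrite ?inE ?aA ?bNA.
Qed.

End TokenDegree.

Lemma compl_graph_sym (T : finType) (e : rel T) :
  symmetric e -> symmetric (compl_graph e).
Proof. by move=> e_sym x y; rewrite /compl_graph e_sym eq_sym. Qed.

Lemma card_boundary_compl (T : finType) (e : rel T) (A : {set T}) :
  #|edge_boundary e A| + #|edge_boundary (compl_graph e) A| = #|A| * #|~: A|.
Proof.
rewrite -cardsX -(cardsID [set p : T * T | e p.1 p.2] (setX A (~: A))).
congr (_ + _); apply: eq_card => -[x y]; rewrite !inE /= /compl_graph ?andbA //.
by case: (eqVneq x y) => [->|_]; case: (y \in A); rewrite ?andbF ?andbT // andbC.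
Qed.

Lemma token_deg_compl (T : finType) (e : rel T) (k : nat) (A : {set T}) :
  symmetric e -> #|A| = k ->
  token_deg e k A + token_deg (compl_graph e) k A = k * (#|T| - k).
Proof.
move=> e_sym cardA.
rewrite (token_deg_boundary e_sym cardA).
rewrite (token_deg_boundary (compl_graph_sym e_sym) cardA) card_boundary_compl.
by rewrite -(cardsC A) cardA addKn.
Qed.

Theorem corollary1 (T : finType) (e : rel T) (k : nat) :
  simple_graph e -> 1 <= k < #|T| ->
  token_regular e k -> token_regular (compl_graph e) k.
Proof.
move=> [_ e_sym] _ [d deg_e]; exists (k * (#|T| - k) - d) => A A_k.
by rewrite -(token_deg_compl e_sym (eqP A_k)) deg_e // addKn.
Qed.
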